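(* Let $M\ge3$, $N\ge3$ and let $\phi\in\{0,1\}^{E(\mathbb{L}_1)}$ be a primal contour configuration. Assume that $\partial B^*_{M,N}$ crosses present edges of $\mathbb{L}_1$ an even number of times. Then one can change the states of the edges of $B_{M-1,N-1}$ (leaving all other edges unchanged) in such a way that in the resulting configuration all present edges of $\mathbb{L}_1$ crossing $\partial B^*_{M,N}$ belong to the same contour, and each vertex of $B_{M-1,N-1}$ has an even number of incident present edges.
   Context: Let $\mathbb{L}_1$ be the graph with vertices $(m-\tfrac12,n+\tfrac12)$, $m,n$ both even, and $\mathbb{L}_2$ the graph with vertices $(m-\tfrac12,n+\tfrac12)$, $m,n$ both odd; in each, two vertices are joined by an edge iff at Euclidean distance $2$; faces of each are squares of side $2$. A primal contour configuration is $\phi\in\{0,1\}^{E(\mathbb{L}_1)}$ in which every vertex of $\mathbb{L}_1$ has an even number of incident present edges (edges with value $1$); a contour is a connected component of the set of present edges. Boxes of $\mathbb{L}_2$: $B^*_{1,1}$ is the face of $\mathbb{L}_2$ containing the origin; for $n$ odd (resp. even), $B^*_{m,n+1}$ is obtained from $B^*_{m,n}$ by adding a column of $m$ faces of $\mathbb{L}_2$ to its right (resp. left); for $m$ odd (resp. even), $B^*_{m+1,n}$ is obtained from $B^*_{m,n}$ by adding a row of $n$ faces of $\mathbb{L}_2$ at its bottom (resp. top). Thus $B^*_{M,N}$ is a rectangle of $M$ rows and $N$ columns of faces of $\mathbb{L}_2$, with boundary $\partial B^*_{M,N}$. $B_{M-1,N-1}$ denotes the subgraph of $\mathbb{L}_1$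 enclosed by $\partial B^*_{M,N}$ (the vertices of $\mathbb{L}_1$ in the interior of the rectangle and the edges of $\mathbb{L}_1$ joining two of them). An edge of $\mathbb{L}_1$ crosses $\partial B^*_{M,N}$ if it joins a vertex inside to a vertex outside the rectangle. *)

From Stdlib Require Import ZArith List Relations.
Open Scope Z_scope.

(* The vertex (a,b) : Z*Z of L1 is the point (2a - 1/2, 2b + 1/2), i.e. (m - 1/2, n + 1/2)
   with m = 2a, n = 2b both even.  Two L1-vertices are at distance 2 iff
   their indices differ by a unit vector, so the edges of L1 are
     EH a b : between (a,b) and (a+1,b)   (horizontal)
     EV a b : between (a,b) and (a,b+1)   (vertical).
   The vertices of L2 are the points (2c + 1/2, 2r + 3/2) (m = 2c+1,
   n = 2r+1 odd).  Each face of L2 is a 2x2 square whose centre is a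
   vertex of L1; we index the face of L2 by the L1-vertex (a,b) at its
   centre: it is the square [2a-3/2, 2a+1/2] x [2b-1/2, 2b+3/2].
   The face containing the origin is the one indexed by (0,0).
   --------------------------------------------------------------------- *)

Definition vtx : Type := (Z * Z)%type.

Inductive edge : Type :=
| EH (a b : Z)
| EV (a b : Z).

Definition ends (e : edge) : vtx * vtx :=
  match e with
  | EH a b => ((a, b), (a + 1, b))
  | EV a b => ((a, b), (a, b + 1))
  end.

Definition incident (v : vtx) (e : edge) : Prop :=
  fst (ends e) = v \/ snd (ends e) = v.

(* A configuration phi in {0,1}^{E(L1)} (true = present). *)
Definition config : Type := edge -> bool.

Definition deg (phi : config) (v : vtx) : nat :=
  let (a, b) := v in
  Nat.b2n (phi (EH a b)) + Nat.b2n (phi (EH (a - 1) b))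
  + Nat.b2n (phi (EV a b)) + Nat.b2n (phi (EV a (b - 1))).

Definition even_at (phi : config) (v : vtx) : Prop := Nat.Even (deg phi v).

Definition contour_config (phi : config) : Prop := forall v, even_at phi v.

(* Two present edges sharing an endpoint are adjacent; a contour is a
   connected component of the set of present edges, so two present edges
   lie in the same contour iff they are related by the reflexive-transitive
   closure of this adjacency. *)
Definition adj (phi : config) (e f : edge) : Prop :=
  phi e = true /\ phi f = true /\ exists v, incident v e /\ incident v f.

Definition same_contour (phi : config) (e f : edge) : Prop :=
  phi e = true /\ phi f = true /\ clos_refl_trans edge (adj phi) e f.

(* ---------------------------------------------------------------------
   Boxes B*_{m,n}.  cols k = (lo, hi) is the range of column indices of
   B*_{m,k+1} (which has k+1 columns): B*_{m,1} has the single column 0;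
   passing from n columns to n+1 we add a column on the right if n is odd
   and on the left if n is even.
   rows k = (lo, hi) is the range of row indices of B*_{k+1,n}: passing
   from m rows to m+1 we add a row at the bottom (lower index) if m is odd
   and at the top if m is even.
   --------------------------------------------------------------------- *)
Fixpoint cols (k : nat) : Z * Z :=
  match k with
  | O => (0, 0)
  | S k' => let (lo, hi) := cols k' in
            if Nat.odd (S k') then (lo, hi + 1) else (lo - 1, hi)
  end.

Fixpoint rows (k : nat) : Z * Z :=
  match k with
  | O => (0, 0)
  | S k' => let (lo, hi) := rows k' in
            if Nat.odd (S k') then (lo - 1, hi) else (lo, hi + 1)
  end.

(* B*_{M,N} is the union of the faces of L2 indexed by (a,b) with
   a in the column range and b in the row range (M rows, N columns,
   M, N >= 1).  A vertex of L1 lies in the interior of the rectangle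
   B*_{M,N} iff it is the centre of one of these faces (the other vertices
   of L1 are centres of faces outside the rectangle, hence outside it). *)
Definition inside (M N : nat) (v : vtx) : Prop :=
  let (a, b) := v in
  fst (cols (N - 1)) <= a <= snd (cols (N - 1)) /\
  fst (rows (M - 1)) <= b <= snd (rows (M - 1)).

Definition box_edge (M N : nat) (e : edge) : Prop :=
  inside M N (fst (ends e)) /\ inside M N (snd (ends e)).

Definition crosses (M N : nat) (e : edge) : Prop :=
  (inside M N (fst (ends e)) /\ ~ inside M N (snd (ends e))) \/
  (~ inside M N (fst (ends e)) /\ inside M N (snd (ends e))).

From Stdlib Require Import ZArith List Relations Permutation Lia Bool Btauto.
Import ListNotations.
Open Scope Z_scope.

(* Call a rectangle of L1-vertices fillable when every configuration with an even number
   of present crossings can be completed inside it. Fillability is invariant under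
   translations and under transposition of the lattice, and passes from p to p + 1
   columns: give all vertical edges of the new column a common state f, set each edge
   linking a column vertex to the old rectangle so that this vertex becomes even, and take
   f = true as soon as this makes some link present. The crossings at the new column are
   then joined, through the column and a present link, to crossings of the smaller
   rectangle, and the parity of the crossings is unchanged because every vertical edge of
   the column is counted at both of its ends. The 3 x 3 block of vertices (p = q = 2) is
   settled by a verified exhaustive search; for a 2 x 2 block single crossings at the four
   corners cannot be joined. *)

Lemma adj_sym (phi : config) (e f : edge) : adj phi e f -> adj phi f e.
Proof. intros (He & Hf & v & Hve & Hvf). repeat split; auto. now exists v. Qed.

Lemma contour_path_sym (phi : config) (e f : edge) :
  clos_refl_trans edge (adj phi) e f -> clos_refl_trans edge (adj phi) f e.
Proof.
  induction 1; [apply rt_step, adj_sym; assumption | apply rt_refl | eapply rt_trans; eauto].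
Qed.

Lemma contour_path_step (phi : config) (v : vtx) (e f : edge) :
  phi e = true -> phi f = true -> incident v e -> incident v f ->
  clos_refl_trans edge (adj phi) e f.
Proof. intros; apply rt_step; repeat split; auto; now exists v. Qed.

Lemma contour_path_map (phi psi : config) (g : edge -> edge) (h : vtx -> vtx) :
  (forall e, psi (g e) = phi e) ->
  (forall v e, incident v e -> incident (h v) (g e)) ->
  forall e f, clos_refl_trans edge (adj phi) e f ->
  clos_refl_trans edge (adj psi) (g e) (g f).
Proof.
  intros Hpsi Hinc e f C.
  induction C as [e f (He & Hf & v & Hve & Hvf)| |]; [|apply rt_refl|eapply rt_trans; eauto].
  apply contour_path_step with (h v); rewrite ?Hpsi; auto.
Qed.

Fixpoint zrange (lo : Z) (n : nat) : list Z :=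
  match n with O => [] | S n' => lo :: zrange (lo + 1) n' end.

Lemma in_zrange (z lo : Z) (n : nat) : In z (zrange lo n) <-> lo <= z < lo + Z.of_nat n.
Proof.
  revert lo; induction n as [|n IH]; intros lo; simpl; [lia|].
  rewrite IH; lia.
Qed.

Lemma NoDup_zrange (lo : Z) (n : nat) : NoDup (zrange lo n).
Proof.
  revert lo; induction n as [|n IH]; intros lo; simpl; constructor; auto.
  rewrite in_zrange; intros H; lia.
Qed.

Lemma zrange_succ (lo : Z) (n : nat) : zrange lo (S n) = zrange lo n ++ [lo + Z.of_nat n].
Proof.
  revert lo; induction n as [|n IH]; intros lo; [simpl; now rewrite Z.add_0_r|].
  change (zrange lo (S (S n))) with (lo :: zrange (lo + 1) (S n)).
  rewrite IH; replace (lo + Z.of_nat (S n)) with (lo + 1 + Z.of_nat n) by lia; reflexivity.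
Qed.

Definition parity (l : list bool) : bool := fold_right xorb false l.

Lemma parity_app (l m : list bool) : parity (l ++ m) = xorb (parity l) (parity m).
Proof. induction l as [|b l IH]; simpl; [reflexivity|]. rewrite IH; btauto. Qed.

Lemma parity_perm (l m : list bool) : Permutation l m -> parity l = parity m.
Proof. induction 1; simpl; try btauto; congruence. Qed.

Lemma parity_map_xorb {A : Type} (f g : A -> bool) (l : list A) :
  parity (map (fun x => xorb (f x) (g x)) l) = xorb (parity (map f l)) (parity (map g l)).
Proof. induction l as [|x l IH]; simpl; [reflexivity|]. rewrite IH; btauto. Qed.

Lemma parity_telescope (g : Z -> bool) (lo : Z) (n : nat) :
  parity (map (fun z => xorb (g z) (g (z - 1))) (zrange lo n)) =
  xorb (g (lo + Z.of_nat n - 1)) (g (lo - 1)).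
Proof.
  induction n as [|n IH]; [simpl; rewrite Z.add_0_r; btauto|].
  rewrite zrange_succ, map_app, parity_app, IH.
  replace (lo + Z.of_nat (S n) - 1) with (lo + Z.of_nat n) by lia.
  simpl; btauto.
Qed.

Lemma even_length_filter {A : Type} (f : A -> bool) (l : list A) :
  Nat.even (length (filter f l)) = negb (parity (map f l)).
Proof.
  induction l as [|x l IH]; [reflexivity|].
  cbn [filter map parity fold_right]; destruct (f x);
  cbn [length]; rewrite ?Nat.even_succ, <- ?Nat.negb_even, IH; unfold parity; btauto.
Qed.

Lemma even_filter_parity {A : Type} (f : A -> bool) (l : list A) :
  Nat.Even (length (filter f l)) <-> parity (map f l) = false.
Proof. rewrite <- Nat.even_spec, even_length_filter; now destruct (parity (map f l)). Qed.

Definition star (v : vtx) : list edge :=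
  [EH (fst v - 1) (snd v); EH (fst v) (snd v); EV (fst v) (snd v); EV (fst v) (snd v - 1)].

Lemma even_at_parity (phi : config) (v : vtx) :
  even_at phi v <-> parity (map phi (star v)) = false.
Proof.
  destruct v as [a b]; unfold even_at, deg, star; simpl; rewrite <- Nat.even_spec.
  destruct (phi (EH a b)), (phi (EH (a - 1) b)), (phi (EV a b)), (phi (EV a (b - 1)));
  simpl; intuition congruence.
Qed.

Lemma vertical_path (psi : config) (a lo hi : Z) :
  (forall b, lo <= b <= hi -> psi (EV a b) = true) ->
  forall b1 b2, lo <= b1 <= hi -> lo <= b2 <= hi ->
  clos_refl_trans edge (adj psi) (EV a b1) (EV a b2).
Proof.
  intros Hcol.
  assert (Up : forall n b1, lo <= b1 -> b1 + Z.of_nat n <= hi ->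
            clos_refl_trans edge (adj psi) (EV a b1) (EV a (b1 + Z.of_nat n))).
  { induction n as [|n IH]; intros b1 H1 H2; [rewrite Z.add_0_r; apply rt_refl|].
    apply rt_trans with (EV a (b1 + Z.of_nat n)); [apply IH; lia|].
    apply contour_path_step with (a, b1 + Z.of_nat n + 1); try (apply Hcol; lia).
    - now right.
    - left; simpl; f_equal; lia. }
  intros b1 b2 H1 H2; destruct (Z.le_ge_cases b1 b2).
  - replace b2 with (b1 + Z.of_nat (Z.to_nat (b2 - b1))) by lia; apply Up; lia.
  - apply contour_path_sym.
    replace b1 with (b2 + Z.of_nat (Z.to_nat (b1 - b2))) by lia; apply Up; lia.
Qed.

Section Rectangle.
Variables (A0 B0 : Z) (p q : nat).

(* The rectangle [A0, A0 + p] x [B0, B0 + q] of L1-vertices; B_{M-1,N-1} has p = N - 1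
   and q = M - 1. *)
Definition in_rect (v : vtx) : Prop :=
  A0 <= fst v <= A0 + Z.of_nat p /\ B0 <= snd v <= B0 + Z.of_nat q.

Definition rect_edge (e : edge) : Prop :=
  in_rect (fst (ends e)) /\ in_rect (snd (ends e)).

Definition rect_crossing (e : edge) : Prop :=
  (in_rect (fst (ends e)) /\ ~ in_rect (snd (ends e))) \/
  (~ in_rect (fst (ends e)) /\ in_rect (snd (ends e))).

Definition frame : list edge :=
  map (fun b => EH (A0 - 1) b) (zrange B0 (S q)) ++
  map (fun b => EH (A0 + Z.of_nat p) b) (zrange B0 (S q)) ++
  map (fun a => EV a (B0 - 1)) (zrange A0 (S p)) ++
  map (fun a => EV a (B0 + Z.of_nat q)) (zrange A0 (S p)).

Definition grid : list edge :=
  flat_map (fun a => map (EH a) (zrange B0 (S q))) (zrange A0 p) ++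
  flat_map (fun a => map (EV a) (zrange B0 q)) (zrange A0 (S p)).

Definition rect_vertices : list vtx :=
  flat_map (fun a => map (pair a) (zrange B0 (S q))) (zrange A0 (S p)).

Lemma in_frame (e : edge) : In e frame <-> rect_crossing e.
Proof.
  unfold frame, rect_crossing, in_rect.
  rewrite !in_app_iff, !in_map_iff; setoid_rewrite in_zrange.
  destruct e as [a b|a b]; simpl; split.
  - intros [[x [E Hx]]|[[x [E Hx]]|[[x [E Hx]]|[x [E Hx]]]]];
      first [discriminate | injection E; lia].
  - intros H; assert (a = A0 - 1 \/ a = A0 + Z.of_nat p) as [-> | ->] by lia;
      [left|right; left]; exists b; split; auto; lia.
  - intros [[x [E Hx]]|[[x [E Hx]]|[[x [E Hx]]|[x [E Hx]]]]];
      first [discriminate | injection E; lia].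
  - intros H; assert (b = B0 - 1 \/ b = B0 + Z.of_nat q) as [-> | ->] by lia;
      [right; right; left|right; right; right]; exists a; split; auto; lia.
Qed.

Lemma NoDup_frame : NoDup frame.
Proof.
  assert (Hmap : forall (g : Z -> edge) lo n, (forall x y, g x = g y -> x = y) ->
            NoDup (map g (zrange lo n)))
    by (intros g lo n Hg; apply FinFun.Injective_map_NoDup; [exact Hg|apply NoDup_zrange]).
  unfold frame.
  repeat apply NoDup_app; try (apply Hmap; intros x y E; now injection E);
  intros e; rewrite ?in_app_iff, !in_map_iff; setoid_rewrite in_zrange;
  intros [x [<- Hx]]; intros H; repeat destruct H as [H|H];
  destruct H as [y [E Hy]]; first [discriminate | injection E; lia].
Qed.

Lemma grid_rect_edge (e : edge) : In e grid -> rect_edge e.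
Proof.
  unfold grid, rect_edge, in_rect; rewrite in_app_iff, !in_flat_map.
  intros [[a [Ha He]]|[a [Ha He]]]; apply in_map_iff in He as [b [<- Hb]];
  rewrite in_zrange in Ha, Hb; simpl; lia.
Qed.

Lemma in_rect_vertices (v : vtx) : in_rect v -> In v rect_vertices.
Proof.
  destruct v as [a b]; unfold in_rect, rect_vertices; intros H.
  apply in_flat_map; exists a; rewrite in_zrange, in_map_iff; simpl in H; split; [lia|].
  exists b; rewrite in_zrange; split; [reflexivity|lia].
Qed.

Definition fillable : Prop :=
  forall phi : config, parity (map phi frame) = false ->
  exists psi : config,
    (forall e, ~ rect_edge e -> psi e = phi e) /\
    (forall e f, rect_crossing e -> rect_crossing f ->
                 psi e = true -> psi f = true -> same_contour psi e f) /\
    (forall v, in_rect v -> even_at psi v).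

End Rectangle.

Section Transport.
Variables (A0 B0 : Z) (p q : nat) (A0' B0' : Z) (p' q' : nat).
Variables (tau tau_inv : edge -> edge) (sigma : vtx -> vtx).
Hypothesis tau_invK : forall e, tau_inv (tau e) = e.
Hypothesis tauK : forall e, tau (tau_inv e) = e.
Hypothesis incident_tau : forall v e, incident v e -> incident (sigma v) (tau e).
Hypothesis rect_edge_tau :
  forall e, rect_edge A0' B0' p' q' (tau e) <-> rect_edge A0 B0 p q e.
Hypothesis rect_crossing_tau :
  forall e, rect_crossing A0' B0' p' q' (tau e) <-> rect_crossing A0 B0 p q e.
Hypothesis even_at_tau : forall (psi : config) v, in_rect A0' B0' p' q' v ->
  exists w, in_rect A0 B0 p q w /\ (even_at psi w -> even_at (fun e => psi (tau_inv e)) v).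

Lemma frame_tau_perm : Permutation (map tau (frame A0 B0 p q)) (frame A0' B0' p' q').
Proof.
  apply NoDup_Permutation.
  - apply FinFun.Injective_map_NoDup; [|apply NoDup_frame].
    intros e f E; rewrite <- (tau_invK e), <- (tau_invK f); congruence.
  - apply NoDup_frame.
  - intros e; rewrite in_map_iff, in_frame; split.
    + intros [x [<- Hx]]; apply rect_crossing_tau, in_frame, Hx.
    + intros He; exists (tau_inv e); rewrite in_frame, <- rect_crossing_tau, tauK; auto.
Qed.

Lemma fillable_transport : fillable A0 B0 p q -> fillable A0' B0' p' q'.
Proof.
  intros G phi Hpar.
  destruct (G (fun e => phi (tau e))) as (psi & Hout & Hcon & Hev).
  { rewrite <- map_map, (parity_perm _ _ (Permutation_map phi frame_tau_perm)); exact Hpar. }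
  exists (fun e => psi (tau_inv e)); split; [|split].
  - intros e He; rewrite Hout, tauK; [reflexivity|].
    rewrite <- rect_edge_tau, tauK; exact He.
  - intros e f He Hf Pe Pf.
    destruct (Hcon (tau_inv e) (tau_inv f)) as (_ & _ & C);
      rewrite <- ?rect_crossing_tau, ?tauK; auto.
    repeat split; auto.
    rewrite <- (tauK e), <- (tauK f).
    apply (contour_path_map psi _ tau sigma); auto.
    intros x; now rewrite tau_invK.
  - intros v Hv; destruct (even_at_tau psi v Hv) as (w & Hw & Ew); auto.
Qed.

End Transport.

Definition transpose (e : edge) : edge :=
  match e with EH a b => EV b a | EV a b => EH b a end.

Lemma fillable_transpose (A0 B0 : Z) (p q : nat) :
  fillable A0 B0 p q -> fillable B0 A0 q p.
Proof.
  apply fillable_transport with transpose transpose (fun v => (snd v, fst v));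
    try (intros []; reflexivity).
  - intros [x y] [a b|a b]; unfold incident; simpl;
      intros [H|H]; injection H as <- <-; auto.
  - intros [a b|a b]; unfold rect_edge, in_rect; simpl; tauto.
  - intros [a b|a b]; unfold rect_crossing, in_rect; simpl; tauto.
  - intros psi [x y] Hv; exists (y, x); unfold in_rect in *; simpl in *; split; [tauto|].
    unfold even_at, deg; simpl; intros [k Hk]; exists k; lia.
Qed.

Definition translate (x y : Z) (e : edge) : edge :=
  match e with EH a b => EH (a + x) (b + y) | EV a b => EV (a + x) (b + y) end.

Lemma fillable_translate (A0 B0 x y : Z) (p q : nat) :
  fillable A0 B0 p q -> fillable (A0 + x) (B0 + y) p q.
Proof.
  apply fillable_transport with (translate x y) (translate (- x) (- y))
    (fun v => (fst v + x, snd v + y));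
    try (intros []; simpl; f_equal; lia).
  - intros [a b] [c d|c d]; unfold incident; simpl;
      intros [H|H]; injection H as <- <-; [left|right|left|right]; f_equal; lia.
  - intros [a b|a b]; unfold rect_edge, in_rect; simpl; lia.
  - intros [a b|a b]; unfold rect_crossing, in_rect; simpl; lia.
  - intros psi [a b] Hv; exists (a - x, b - y); unfold in_rect in *; simpl in *; split; [lia|].
    unfold even_at, deg; simpl.
    replace (a + - x) with (a - x) by lia; replace (b + - y) with (b - y) by lia;
    replace (a - 1 + - x) with (a - x - 1) by lia; replace (b - 1 + - y) with (b - y - 1) by lia.
    tauto.
Qed.

Ltac decide_Z := repeat match goal with
  | |- context [Z.eqb ?x ?y] => destruct (Z.eqb_spec x y)
  | |- context [Z.leb ?x ?y] => destruct (Z.leb_spec x y)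
  | |- context [Z.ltb ?x ?y] => destruct (Z.ltb_spec x y)
  end; simpl; try (exfalso; lia).

Section AddColumn.
Variables (A0 B0 : Z) (p q : nat).

Local Notation Ap := (A0 + Z.of_nat p).
Local Notation A1 := (A0 + Z.of_nat p + 1).
Local Notation B1 := (B0 + Z.of_nat q).

Definition fill_column (f : bool) (phi : config) : config := fun e =>
  match e with
  | EV a b => if (a =? A1) && (B0 <=? b) && (b <? B1) then f else phi e
  | EH _ _ => phi e
  end.

Definition balance_links (phi : config) : config := fun e =>
  match e with
  | EH a b => if (a =? Ap) && (B0 <=? b) && (b <=? B1)
              then xorb (phi (EH A1 b)) (xorb (phi (EV A1 b)) (phi (EV A1 (b - 1))))
              else phi e
  | EV _ _ => phi e
  end.

Definition column_config (f : bool) (phi : config) : config :=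
  balance_links (fill_column f phi).

(* If no link is present for f = true, then for f = false every column vertex carrying a
   present crossing has a present link of its own. *)
Definition column_state (phi : config) : bool :=
  existsb (fun b => column_config true phi (EH Ap b)) (zrange B0 (S q)).

Definition reduce_column (phi : config) : config := column_config (column_state phi) phi.

Lemma column_config_outside (f : bool) (phi : config) (e : edge) :
  ~ rect_edge A0 B0 (S p) q e -> column_config f phi e = phi e.
Proof.
  unfold rect_edge, in_rect; destruct e as [a b|a b];
    unfold column_config, balance_links, fill_column; simpl; intros H; decide_Z; auto.
Qed.

Lemma column_config_link (f : bool) (phi : config) (b : Z) : B0 <= b <= B1 ->
  column_config f phi (EH Ap b) =
  xorb (phi (EH A1 b)) (xorb (fill_column f phi (EV A1 b)) (fill_column f phi (EV A1 (b - 1)))).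
Proof. intros Hb; unfold column_config, balance_links; decide_Z; reflexivity. Qed.

Lemma column_config_vertical (f : bool) (phi : config) (b : Z) : B0 <= b < B1 ->
  column_config f phi (EV A1 b) = f.
Proof. intros Hb; unfold column_config, balance_links, fill_column; decide_Z; reflexivity. Qed.

Lemma column_config_even (f : bool) (phi : config) (b : Z) : B0 <= b <= B1 ->
  even_at (column_config f phi) (A1, b).
Proof.
  intros Hb; apply even_at_parity; unfold star; simpl.
  replace (A0 + Z.of_nat p + 1 - 1) with Ap by lia.
  unfold column_config, balance_links, fill_column; decide_Z; btauto.
Qed.

Lemma column_config_frame (f : bool) (phi : config) :
  parity (map (column_config f phi) (frame A0 B0 p q)) =
  parity (map phi (frame A0 B0 (S p) q)).
Proof.
  assert (Out : forall (g : Z -> edge) l, (forall x, In x l -> ~ rect_edge A0 B0 (S p) q (g x)) ->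
            map (column_config f phi) (map g l) = map phi (map g l))
    by (intros g l Hl; rewrite !map_map; apply map_ext_in; intros x Hx;
        apply column_config_outside, Hl, Hx).
  unfold frame; rewrite (zrange_succ A0 (S p)), !map_app, !parity_app.
  rewrite (Out (fun b => EH (A0 - 1) b)), (Out (fun a => EV a (B0 - 1))), (Out (fun a => EV a B1))
    by (intros x Hx; rewrite in_zrange in Hx; unfold rect_edge, in_rect; simpl; lia).
  rewrite (map_map (fun b => EH Ap b)), (map_ext_in _ (fun b => xorb (phi (EH A1 b))
             (xorb (fill_column f phi (EV A1 b)) (fill_column f phi (EV A1 (b - 1))))))
    by (intros b Hb; apply column_config_link; rewrite in_zrange in Hb; lia).
  (* every inner vertical is counted at both ends; only the two crossing verticals remain *)
  rewrite parity_map_xorb, parity_telescope, map_map.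
  replace (A0 + Z.of_nat (S p)) with A1 by lia.
  replace (B0 + Z.of_nat (S q) - 1) with B1 by lia.
  rewrite !map_map; simpl; unfold fill_column; decide_Z; btauto.
Qed.
Section Linking.
Variables (phi psi : config).
Hypothesis q_pos : (1 <= q)%nat.
Hypothesis psi_reduce : forall e, ~ rect_edge A0 B0 p q e -> psi e = reduce_column phi e.

Definition linked (e : edge) : Prop :=
  exists g, rect_crossing A0 B0 p q g /\ psi g = true /\ clos_refl_trans edge (adj psi) e g.

Lemma psi_at_column (b : Z) (e : edge) : incident (A1, b) e -> psi e = reduce_column phi e.
Proof.
  intros Hi; apply psi_reduce; destruct e as [x y|x y]; destruct Hi as [Hi|Hi]; injection Hi;
    unfold rect_edge, in_rect; simpl; lia.
Qed.

Lemma linked_column_on (b0 : Z) (e : edge) :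
  column_state phi = true -> B0 <= b0 <= B1 -> incident (A1, b0) e -> psi e = true -> linked e.
Proof.
  intros Hf Hb0 He Pe.
  assert (Hred : reduce_column phi = column_config true phi)
    by (unfold reduce_column; now rewrite Hf).
  unfold column_state in Hf; apply existsb_exists in Hf as [bs [Hbs Link]].
  rewrite in_zrange in Hbs.
  assert (Vert : forall b, B0 <= b <= B1 - 1 -> psi (EV A1 b) = true)
    by (intros b Hb; rewrite (psi_at_column b), Hred by (now left);
        apply column_config_vertical; lia).
  assert (Up : forall b, B0 <= b <= B1 -> incident (A1, b) (EV A1 (Z.min b (B1 - 1))))
    by (intros b Hb; unfold incident; simpl; destruct (Z.le_gt_cases b (B1 - 1));
        [left|right]; f_equal; lia).
  assert (Pg : psi (EH Ap bs) = true)
    by (rewrite (psi_at_column bs), Hred by (right; simpl; f_equal; lia); exact Link).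
  exists (EH Ap bs); split; [|split]; auto.
  - unfold rect_crossing, in_rect; simpl; lia.
  - apply rt_trans with (EV A1 (Z.min b0 (B1 - 1))).
    { apply contour_path_step with (A1, b0); auto; apply Vert; lia. }
    apply rt_trans with (EV A1 (Z.min bs (B1 - 1))).
    { apply (vertical_path psi A1 B0 (B1 - 1)); auto; lia. }
    apply contour_path_step with (A1, bs);
      [apply Vert; lia | exact Pg | apply Up; lia | right; simpl; f_equal; lia].
Qed.

Lemma linked_column_off (b0 : Z) (e : edge) :
  column_state phi = false -> B0 <= b0 <= B1 ->
  e = EH A1 b0 \/ (b0 = B0 /\ e = EV A1 (B0 - 1)) \/ (b0 = B1 /\ e = EV A1 B1) ->
  psi e = true -> linked e.
Proof.
  intros Hf Hb0 Form Pe.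
  assert (Hred : reduce_column phi = column_config false phi)
    by (unfold reduce_column; now rewrite Hf).
  assert (He : incident (A1, b0) e)
    by (destruct Form as [->|[[-> ->]|[-> ->]]]; unfold incident; simpl; auto;
        right; f_equal; lia).
  assert (Pe' : phi e = true).
  { rewrite <- Pe, (psi_at_column b0 e He), Hred, column_config_outside; [reflexivity|].
    destruct Form as [->|[[-> ->]|[-> ->]]]; unfold rect_edge, in_rect; simpl; lia. }
  assert (NoLink : column_config true phi (EH Ap b0) = false).
  { destruct (column_config true phi (EH Ap b0)) eqn:E; [|reflexivity].
    rewrite <- Hf; symmetry; apply existsb_exists.
    exists b0; rewrite in_zrange; split; [lia|exact E]. }
  assert (Pg : psi (EH Ap b0) = true).
  { rewrite (psi_at_column b0), Hred by (right; simpl; f_equal; lia).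
    revert NoLink Pe'; rewrite !column_config_link by lia.
    destruct Form as [->|[[-> ->]|[-> ->]]]; unfold fill_column; decide_Z;
      repeat match goal with |- context [phi ?x] => destruct (phi x) end; simpl; congruence. }
  exists (EH Ap b0); split; [|split]; auto.
  - unfold rect_crossing, in_rect; simpl; lia.
  - apply contour_path_step with (A1, b0); auto; right; simpl; f_equal; lia.
Qed.

Lemma crossing_linked (e : edge) : rect_crossing A0 B0 (S p) q e -> psi e = true -> linked e.
Proof.
  intros He Pe.
  assert (Small : rect_crossing A0 B0 p q e -> linked e)
    by (intros Hs; exists e; auto using rt_refl).
  assert (Column : forall b0, B0 <= b0 <= B1 ->
            e = EH A1 b0 \/ (b0 = B0 /\ e = EV A1 (B0 - 1)) \/ (b0 = B1 /\ e = EV A1 B1) ->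
            linked e).
  { intros b0 Hb0 Form; destruct (column_state phi) eqn:Hf.
    - apply (linked_column_on b0); auto.
      destruct Form as [->|[[-> ->]|[-> ->]]]; unfold incident; simpl; auto; right; f_equal; lia.
    - apply (linked_column_off b0); auto. }
  unfold rect_crossing, in_rect in He; destruct e as [a b|a b]; simpl in He;
    (destruct (Z.eq_dec a A1) as [->|Ha];
     [|apply Small; unfold rect_crossing, in_rect; simpl; lia]).
  - apply (Column b); auto; lia.
  - assert (b = B0 - 1 \/ b = B1) as [-> | ->] by lia;
      [apply (Column B0)|apply (Column B1)]; auto; lia.
Qed.

End Linking.

Lemma fillable_add_column : (1 <= q)%nat -> fillable A0 B0 p q -> fillable A0 B0 (S p) q.
Proof.
  intros Hq G phi Hpar.
  destruct (G (reduce_column phi)) as (psi & Hout & Hcon & Hev).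
  { unfold reduce_column; rewrite column_config_frame; exact Hpar. }
  exists psi; split; [|split].
  - intros e He; rewrite Hout; [unfold reduce_column; apply column_config_outside, He|].
    destruct e as [a b|a b]; unfold rect_edge, in_rect in *; simpl in *; lia.
  - intros e f He Hf Pe Pf.
    destruct (crossing_linked phi psi Hq Hout e He Pe) as (g1 & Hg1 & Pg1 & C1).
    destruct (crossing_linked phi psi Hq Hout f Hf Pf) as (g2 & Hg2 & Pg2 & C2).
    destruct (Hcon g1 g2 Hg1 Hg2 Pg1 Pg2) as (_ & _ & C).
    repeat split; auto.
    apply rt_trans with g1; auto; apply rt_trans with g2; auto using contour_path_sym.
  - intros [a b] Hv; destruct (Z.le_gt_cases a Ap) as [Ha|Ha].
    + apply Hev; unfold in_rect in *; simpl in *; lia.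
    + unfold in_rect in Hv; simpl in Hv; replace a with A1 by lia.
      apply even_at_parity; rewrite (map_ext_in _ (reduce_column phi)).
      * apply even_at_parity; unfold reduce_column; apply column_config_even; lia.
      * unfold star; simpl; intros e Hs; apply Hout.
        repeat destruct Hs as [<-|Hs]; try contradiction; unfold rect_edge, in_rect; simpl; lia.
Qed.
End AddColumn.

Definition edge_eqb (e f : edge) : bool :=
  match e, f with
  | EH a b, EH c d | EV a b, EV c d => (a =? c) && (b =? d)
  | _, _ => false
  end.

Lemma edge_eqb_eq (e f : edge) : edge_eqb e f = true -> e = f.
Proof.
  destruct e, f; simpl; try discriminate.
  all: rewrite andb_true_iff, !Z.eqb_eq; intros [-> ->]; reflexivity.
Qed.

Fixpoint index_of (e : edge) (es : list edge) : nat :=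
  match es with
  | [] => O
  | f :: es' => if edge_eqb e f then O else S (index_of e es')
  end.

Lemma nth_index_of (e d : edge) (es : list edge) :
  (index_of e es < length es)%nat -> nth (index_of e es) es d = e.
Proof.
  induction es as [|f es IH]; simpl; [lia|].
  destruct (edge_eqb e f) eqn:E; [symmetry; apply edge_eqb_eq, E|].
  intros H; apply IH; lia.
Qed.

Definition vtx_eqb (u v : vtx) : bool := (fst u =? fst v) && (snd u =? snd v).

Definition shareb (e f : edge) : bool :=
  vtx_eqb (fst (ends e)) (fst (ends f)) || vtx_eqb (fst (ends e)) (snd (ends f)) ||
  vtx_eqb (snd (ends e)) (fst (ends f)) || vtx_eqb (snd (ends e)) (snd (ends f)).

Lemma shareb_incident (e f : edge) : shareb e f = true -> exists v, incident v e /\ incident v f.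
Proof.
  assert (Eq : forall u v : vtx, vtx_eqb u v = true -> u = v)
    by (intros [] []; unfold vtx_eqb; simpl; rewrite andb_true_iff, !Z.eqb_eq;
        intros [-> ->]; auto).
  unfold shareb, incident; rewrite !orb_true_iff; intros [[[H|H]|H]|H]; apply Eq in H.
  - exists (fst (ends e)); auto.
  - exists (fst (ends e)); auto.
  - exists (snd (ends e)); auto.
  - exists (snd (ends e)); auto.
Qed.

Lemma nth_map_seq (f : nat -> bool) (L j : nat) :
  nth j (map f (seq 0 L)) false = true -> (j < L)%nat /\ f j = true.
Proof.
  intros H; destruct (Nat.lt_ge_cases j L).
  - rewrite (nth_indep _ false (f O)), map_nth, seq_nth in H
      by (rewrite ?length_map, ?length_seq; lia).
    auto.
  - rewrite nth_overflow in H by (rewrite length_map, length_seq; lia); discriminate.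
Qed.

Lemma nth_map_lt {A B : Type} (g : A -> B) (l : list A) (j : nat) (d : A) (d' : B) :
  (j < length l)%nat -> nth j (map g l) d' = g (nth j l d).
Proof.
  intros H; rewrite (nth_indep _ d' (g d)) by (rewrite length_map; exact H); apply map_nth.
Qed.

Definition neighbours (es : list edge) : list (list nat) :=
  map (fun e => filter (fun j => shareb e (nth j es e)) (seq 0 (length es))) es.

(* [vals] lists the states of the edges [es]; the frame edges are those at positions >= n. *)
Section Connectivity.
Variables (es : list edge) (nbrs : list (list nat)) (n : nat).

Definition spread (vals m : list bool) : list bool :=
  map (fun j => nth j m false ||
                nth j vals false && existsb (fun i => nth i m false) (nth j nbrs []))
      (seq 0 (length es)).

Fixpoint reach (fuel : nat) (vals m : list bool) : list bool :=
  match fuel with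
  | O => m
  | S k => let m' := spread vals m in
           if length (filter id m') =? length (filter id m) then m else reach k vals m'
  end%nat.

Definition frame_connected (vals : list bool) : bool :=
  let fr := seq n (length es - n) in
  match find (fun k => nth k vals false) fr with
  | None => true
  | Some s =>
      let r := reach (length es) vals (map (Nat.eqb s) (seq 0 (length es))) in
      forallb (fun k => implb (nth k vals false) (nth k r false)) fr
  end.

Variable psi : config.
Variable vals : list bool.
Hypothesis nbrs_neighbours : nbrs = neighbours es.
Hypothesis psi_vals : forall k, (k < length es)%nat -> psi (nth k es (EH 0 0)) = nth k vals false.

Definition reached_from (s : nat) (m : list bool) : Prop :=
  forall j, nth j m false = true ->
  (j < length es)%nat /\ psi (nth j es (EH 0 0)) = true /\
  clos_refl_trans edge (adj psi) (nth s es (EH 0 0)) (nth j es (EH 0 0)).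

Lemma spread_reached (s : nat) (m : list bool) :
  reached_from s m -> reached_from s (spread vals m).
Proof.
  intros R j H; unfold spread in H; apply nth_map_seq in H as [Hj H].
  apply orb_true_iff in H as [H|H]; [apply R, H|].
  apply andb_true_iff in H as [Vj H]; apply existsb_exists in H as [i [Hi Mi]].
  destruct (R i Mi) as (Hi' & Pi & C).
  rewrite nbrs_neighbours in Hi; unfold neighbours in Hi.
  rewrite (nth_map_lt _ _ _ (EH 0 0)), filter_In in Hi by exact Hj; destruct Hi as [_ Sh].
  rewrite (nth_indep es (nth j es (EH 0 0)) (EH 0 0)) in Sh by exact Hi'.
  destruct (shareb_incident _ _ Sh) as (v & Hvj & Hvi).
  assert (Pj : psi (nth j es (EH 0 0)) = true) by (rewrite psi_vals; auto).
  repeat split; auto.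
  apply rt_trans with (nth i es (EH 0 0)); auto.
  apply contour_path_step with v; auto.
Qed.

Lemma reach_reached (s fuel : nat) (m : list bool) :
  reached_from s m -> reached_from s (reach fuel vals m).
Proof.
  revert m; induction fuel as [|fuel IH]; intros m R; simpl; auto.
  destruct (_ =? _)%nat; auto using spread_reached.
Qed.

Lemma frame_connected_sound : frame_connected vals = true ->
  forall k1 k2, (n <= k1 < length es)%nat -> (n <= k2 < length es)%nat ->
  nth k1 vals false = true -> nth k2 vals false = true ->
  clos_refl_trans edge (adj psi) (nth k1 es (EH 0 0)) (nth k2 es (EH 0 0)).
Proof.
  unfold frame_connected; intros H k1 k2 H1 H2 V1 V2.
  destruct (find _ _) as [s|] eqn:F.
  - apply find_some in F as [Fs Vs]; rewrite in_seq in Fs.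
    assert (R : reached_from s (reach (length es) vals (map (Nat.eqb s) (seq 0 (length es))))).
    { apply reach_reached; intros j Hj; apply nth_map_seq in Hj as [Hj E].
      apply Nat.eqb_eq in E; subst j; rewrite psi_vals by lia; auto using rt_refl. }
    rewrite forallb_forall in H.
    assert (R1 := H k1 ltac:(apply in_seq; lia)); assert (R2 := H k2 ltac:(apply in_seq; lia)).
    rewrite V1 in R1; rewrite V2 in R2.
    destruct (R k1 R1) as (_ & _ & C1); destruct (R k2 R2) as (_ & _ & C2).
    apply rt_trans with (nth s es (EH 0 0)); auto using contour_path_sym.
  - rewrite (find_none _ _ F k1) in V1; [discriminate|apply in_seq; lia].
Qed.

End Connectivity.

Definition star_indices (es : list edge) (vs : list vtx) : list (list nat) :=
  map (fun v => map (fun e => index_of e es) (star v)) vs.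

Definition stars_even (stars : list (list nat)) (vals : list bool) : bool :=
  forallb (fun st => negb (parity (map (fun i => nth i vals false) st))) stars.

Fixpoint bitlists (n : nat) : list (list bool) :=
  match n with
  | O => [[]]
  | S n' => map (cons false) (bitlists n') ++ map (cons true) (bitlists n')
  end.

Lemma in_bitlists (l : list bool) : In l (bitlists (length l)).
Proof.
  induction l as [|b l IH]; simpl; [auto|].
  rewrite in_app_iff, !in_map_iff; destruct b; [right|left]; eauto.
Qed.

Fixpoint bits_eqb (l m : list bool) : bool :=
  match l, m with
  | [], [] => true
  | a :: l', b :: m' => Bool.eqb a b && bits_eqb l' m'
  | _, _ => false
  end.

(* The fills with an even degree at every vertex are one particular fill xor the even
   subgraphs ("cycles") of the grid; each candidate is rechecked, so the search itself
   needs no proof. *)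
Definition fill_search (es : list edge) (n : nat) (stars nbrs : list (list nat)) : bool :=
  let nfr := (length es - n)%nat in
  let signature vals := map (fun st => parity (map (fun i => nth i vals false) st)) stars in
  let table := map (fun s => (s, signature (s ++ repeat false nfr))) (bitlists n) in
  let cycles := map fst (filter (fun x => negb (existsb id (snd x))) table) in
  forallb (fun pat =>
    if parity pat then true else
    let target := signature (repeat false n ++ pat) in
    match find (fun x => bits_eqb (snd x) target) table with
    | None => false
    | Some (s, _) =>
        existsb (fun c =>
          let vals := map (fun x => xorb (fst x) (snd x)) (combine s c) ++ pat in
          (length vals =? length es)%nat && stars_even stars vals && frame_connected es nbrs n vals)
          cycles
    end) (bitlists nfr).

Lemma fill_search_spec (es : list edge) (n : nat) (stars nbrs : list (list nat)) (pat : list bool) :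
  fill_search es n stars nbrs = true -> length pat = (length es - n)%nat -> parity pat = false ->
  exists s, length (s ++ pat) = length es /\ stars_even stars (s ++ pat) = true /\
            frame_connected es nbrs n (s ++ pat) = true.
Proof.
  unfold fill_search; intros H Hl Hp; rewrite forallb_forall in H.
  specialize (H pat); rewrite <- Hl, Hp in H; specialize (H (in_bitlists pat)).
  destruct (find _ _) as [[s sg]|]; [|discriminate].
  apply existsb_exists in H as [c [_ Hc]].
  rewrite !andb_true_iff, Nat.eqb_eq in Hc; destruct Hc as [[Hlen Hev] Hcon].
  eexists; eauto.
Qed.

Section RectCheck.
Variables (A0 B0 : Z) (p q : nat).

Local Notation gr := (grid A0 B0 p q).
Local Notation fr := (frame A0 B0 p q).
Local Notation es := (grid A0 B0 p q ++ frame A0 B0 p q).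

Definition rect_check : bool :=
  forallb (fun k => index_of (nth k es (EH 0 0)) es =? k)%nat (seq 0 (length es)) &&
  forallb (fun v => forallb (fun e => index_of e es <? length es)%nat (star v))
    (rect_vertices A0 B0 p q) &&
  fill_search es (length gr) (star_indices es (rect_vertices A0 B0 p q)) (neighbours es).

Definition fill_config (vals : list bool) (phi : config) : config := fun e =>
  if (index_of e es <? length gr)%nat then nth (index_of e es) vals false else phi e.

Lemma fill_config_nth (s : list bool) (phi : config) (k : nat) :
  (forall k, (k < length es)%nat -> index_of (nth k es (EH 0 0)) es = k) ->
  length s = length gr -> (k < length es)%nat ->
  fill_config (s ++ map phi fr) phi (nth k es (EH 0 0)) = nth k (s ++ map phi fr) false.
Proof.
  intros Idx Hs Hk; unfold fill_config; rewrite Idx by exact Hk.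
  destruct (Nat.ltb_spec k (length gr)); [reflexivity|].
  rewrite length_app in Hk; replace k with (length gr + (k - length gr))%nat by lia.
  rewrite app_nth2_plus, <- Hs, app_nth2_plus, (nth_map_lt phi fr _ (EH 0 0)) by lia.
  reflexivity.
Qed.

Theorem rect_check_sound : rect_check = true -> fillable A0 B0 p q.
Proof.
  unfold rect_check; rewrite !andb_true_iff, !forallb_forall.
  intros [[Pos Stars] Search] phi Hpar.
  destruct (fill_search_spec _ _ _ _ (map phi fr) Search) as (s & Hlen & Hev & Hcon);
    [rewrite length_map, length_app; lia|exact Hpar|].
  assert (Hs : length s = length gr) by (rewrite !length_app, length_map in Hlen; lia).
  assert (Idx : forall k, (k < length es)%nat -> index_of (nth k es (EH 0 0)) es = k)
    by (intros k Hk; apply Nat.eqb_eq, Pos, in_seq; lia).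
  assert (Agree : forall k, (k < length es)%nat ->
            fill_config (s ++ map phi fr) phi (nth k es (EH 0 0)) = nth k (s ++ map phi fr) false)
    by (intros k; apply fill_config_nth; assumption).
  exists (fill_config (s ++ map phi fr) phi); split; [|split].
  - intros e He; unfold fill_config.
    destruct (Nat.ltb_spec (index_of e es) (length gr)) as [Hi|]; [|reflexivity].
    exfalso; apply He, grid_rect_edge.
    rewrite <- (nth_index_of e (EH 0 0) es) by (rewrite length_app; lia).
    rewrite app_nth1 by exact Hi; apply nth_In, Hi.
  - intros e f He Hf Pe Pf.
    apply in_frame, (In_nth _ _ (EH 0 0)) in He as (i & Hi & <-).
    apply in_frame, (In_nth _ _ (EH 0 0)) in Hf as (j & Hj & <-).
    rewrite <- (app_nth2_plus gr fr (EH 0 0) i) in Pe |- *.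
    rewrite <- (app_nth2_plus gr fr (EH 0 0) j) in Pf |- *.
    repeat split; auto.
    apply (frame_connected_sound es (neighbours es) (length gr) _ (s ++ map phi fr));
      rewrite ?length_app; auto; try lia.
    + intros k Hk; apply Agree; rewrite length_app; exact Hk.
    + rewrite <- Agree by (rewrite length_app; lia); exact Pe.
    + rewrite <- Agree by (rewrite length_app; lia); exact Pf.
  - intros v Hv; apply in_rect_vertices in Hv; apply even_at_parity.
    unfold stars_even in Hev; rewrite forallb_forall in Hev.
    specialize (Hev (map (fun e => index_of e es) (star v)) ltac:(apply in_map_iff; eauto)).
    rewrite map_map, negb_true_iff in Hev; rewrite <- Hev.
    f_equal; apply map_ext_in; intros e Hse.
    specialize (Stars v Hv); rewrite forallb_forall in Stars.
    assert (Hi : (index_of e es < length es)%nat) by (apply Nat.ltb_lt, Stars, Hse).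
    rewrite <- Agree, nth_index_of; auto.
Qed.

End RectCheck.

Lemma fillable_2_2 : fillable 0 0 2 2.
Proof. apply rect_check_sound; vm_compute; reflexivity. Qed.

Lemma fillable_add_row (A0 B0 : Z) (p q : nat) :
  (1 <= p)%nat -> fillable A0 B0 p q -> fillable A0 B0 p (S q).
Proof. intros Hp G; apply fillable_transpose, fillable_add_column, fillable_transpose; auto. Qed.

Lemma fillable_ge_2 (A0 B0 : Z) (m k : nat) : fillable A0 B0 (2 + m) (2 + k).
Proof.
  induction k as [|k IH].
  - induction m as [|m IH].
    + rewrite <- (Z.add_0_l A0), <- (Z.add_0_l B0); apply fillable_translate, fillable_2_2.
    + apply (fillable_add_column A0 B0 (2 + m) 2); auto.
  - apply (fillable_add_row A0 B0 (2 + m) (2 + k)); [lia|exact IH].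
Qed.

Lemma parity_of_listing (phi : config) (l fr : list edge) :
  NoDup l -> NoDup fr -> (forall e, In e l <-> In e fr /\ phi e = true) ->
  Nat.Even (length l) -> parity (map phi fr) = false.
Proof.
  intros Hl Hfr Hin Hev; apply even_filter_parity.
  rewrite <- (Permutation_length (NoDup_Permutation Hl (NoDup_filter phi Hfr)
                                    (fun e => iff_trans (Hin e) (iff_sym (filter_In phi e fr))))).
  exact Hev.
Qed.

Lemma cols_span (k : nat) : snd (cols k) = fst (cols k) + Z.of_nat k.
Proof.
  induction k as [|k IH]; simpl; [reflexivity|].
  destruct (cols k) as [lo hi]; simpl in *; destruct (Nat.odd (S k)); simpl; lia.
Qed.

Lemma rows_span (k : nat) : snd (rows k) = fst (rows k) + Z.of_nat k.
Proof.
  induction k as [|k IH]; simpl; [reflexivity|].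
  destruct (rows k) as [lo hi]; simpl in *; destruct (Nat.odd (S k)); simpl; lia.
Qed.

Theorem lemma4p2 (M N : nat) (phi : config) :
  (3 <= M)%nat -> (3 <= N)%nat ->
  contour_config phi ->
  (* the boundary crosses present edges an even number of times *)
  (exists l : list edge,
      NoDup l /\
      (forall e, In e l <-> (crosses M N e /\ phi e = true)) /\
      Nat.Even (length l)) ->
  exists psi : config,
    (forall e, ~ box_edge M N e -> psi e = phi e) /\
    (forall e f, crosses M N e -> crosses M N f ->
                 psi e = true -> psi f = true -> same_contour psi e f) /\
    (forall v, inside M N v -> even_at psi v).
Proof.
  intros HM HN _ (l & Hnd & Hl & Hev).
  set (A0 := fst (cols (N - 1))); set (B0 := fst (rows (M - 1))).
  assert (Ins : forall v, inside M N v <-> in_rect A0 B0 (N - 1) (M - 1) v)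
    by (intros [a b]; unfold inside, in_rect, A0, B0; rewrite cols_span, rows_span; simpl; tauto).
  assert (Box : forall e, box_edge M N e <-> rect_edge A0 B0 (N - 1) (M - 1) e)
    by (intros e; unfold box_edge, rect_edge; rewrite !Ins; tauto).
  assert (Cr : forall e, crosses M N e <-> rect_crossing A0 B0 (N - 1) (M - 1) e)
    by (intros e; unfold crosses, rect_crossing; rewrite !Ins; tauto).
  assert (G := fillable_ge_2 A0 B0 (N - 3) (M - 3)).
  replace (2 + (N - 3))%nat with (N - 1)%nat in G by lia.
  replace (2 + (M - 3))%nat with (M - 1)%nat in G by lia.
  destruct (G phi) as (psi & Hout & Hcon & Hin).
  { apply (parity_of_listing phi l); auto using NoDup_frame.
    intros e; rewrite in_frame, <- Cr; apply Hl. }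
  exists psi; split; [|split].
  - intros e He; apply Hout; rewrite <- Box; exact He.
  - intros e f He Hf; apply Hcon; apply Cr; assumption.
  - intros v Hv; apply Hin, Ins, Hv.
Qed.
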